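(* Let $\Delta,\Sigma$ be alphabets and $\varphi:\Delta\to2^{\Sigma^*}$ a regular language substitution. Let $L\subseteq\Delta^*$ be a union-free language of the form $L=N_1S_1^\star N_2\cdots N_mS_m^\star N_{m+1}$ with words $N_h\in\Delta^*$ and union-free languages $S_h\subseteq\Delta^*$. If $\varepsilon\in\varphi(w)$ for all $w\in S_h$ and all $h\in\{1,\dots,m\}$, then $L$ has 1-word summaries.
   Context: A regular language substitution $\varphi:\Delta\to2^{\Sigma^*}$ maps each symbol to a regular language over $\Sigma$, extended to words by $\varphi(\varepsilon)=\{\varepsilon\}$, $\varphi(\delta w)=\varphi(\delta)\varphi(w)$, and to sets of words by $\varphi(L)=\bigcup_{w\in L}\varphi(w)$. A language is union-free if it is denoted by a regular expression using only symbols, concatenation and Kleene star (no union). A language $L\subseteq\Delta^*$ has 1-word summaries if for every finite subset $F\subseteq L$ there exists a word $w\in L$ with $\varphi(F)\subseteq\varphi(w)$. *)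

From mathcomp Require Import all_boot.
From Stdlib Require Lists.List.
Set Implicit Arguments. Unset Strict Implicit. Unset Printing Implicit Defensive.

Definition lang (T : Type) := seq T -> Prop.

Definition lword (T : Type) (u : seq T) : lang T := fun w => w = u.
Definition lcat (T : Type) (A B : lang T) : lang T :=
  fun w => exists u v, w = u ++ v /\ A u /\ B v.
Definition lstar (T : Type) (A : lang T) : lang T :=
  fun w => exists ws : seq (seq T), (forall x, Stdlib.Lists.List.In x ws -> A x) /\ w = flatten ws.
Definition lunion (T : Type) (A B : lang T) : lang T := fun w => A w \/ B w.
Definition lvoid (T : Type) : lang T := fun _ => False.

Inductive regex (T : Type) :=
| RVoid | REps | RSym of T | RPlus of regex T & regex T
| RCat of regex T & regex T | RStar of regex T.

Fixpoint rlang (T : Type) (r : regex T) : lang T :=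
  match r with
  | RVoid => @lvoid T
  | REps => @lword T [::]
  | RSym a => lword [:: a]
  | RPlus r1 r2 => lunion (rlang r1) (rlang r2)
  | RCat r1 r2 => lcat (rlang r1) (rlang r2)
  | RStar r1 => lstar (rlang r1)
  end.

Definition regular (T : Type) (A : lang T) : Prop :=
  exists r : regex T, forall w, rlang r w <-> A w.

Inductive ufregex (T : Type) :=
| UFSym of T | UFCat of ufregex T & ufregex T | UFStar of ufregex T.

Fixpoint uflang (T : Type) (r : ufregex T) : lang T :=
  match r with
  | UFSym a => lword [:: a]
  | UFCat r1 r2 => lcat (uflang r1) (uflang r2)
  | UFStar r1 => lstar (uflang r1)
  end.

Definition union_free (T : Type) (A : lang T) : Prop :=
  exists r : ufregex T, forall w, uflang r w <-> A w.

Fixpoint subst_word (D S : Type) (phi : D -> lang S) (w : seq D) : lang S :=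
  match w with
  | [::] => @lword S [::]
  | d :: w' => lcat (phi d) (subst_word phi w')
  end.

Definition subst_lang (D S : Type) (phi : D -> lang S) (L : lang D) : lang S :=
  fun x => exists w, L w /\ subst_word phi w x.

Definition regular_subst (D S : Type) (phi : D -> lang S) : Prop :=
  forall d, regular (phi d).

Definition one_word_summaries (D S : Type) (phi : D -> lang S) (L : lang D) : Prop :=
  forall F : seq (seq D), (forall u, Stdlib.Lists.List.In u F -> L u) ->
    exists w, L w /\
      (forall x, subst_lang phi (fun u => Stdlib.Lists.List.In u F) x -> subst_word phi w x).

(* The language N_1 S_1^* N_2 ... N_m S_m^* N_{m+1}, given by the list
   NS = [:: (N_1, S_1); ...; (N_m, S_m)] and the final word N_{m+1}. *)
Fixpoint block_lang (D : Type) (NS : seq (seq D * ufregex D)) (Nlast : seq D) : lang D :=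
  match NS with
  | [::] => lword Nlast
  | (N, Sr) :: NS' => lcat (lword N) (lcat (lstar (uflang Sr)) (block_lang NS' Nlast))
  end.

From mathcomp Require Import all_boot.

Set Implicit Arguments.
Unset Strict Implicit.
Unset Printing Implicit Defensive.

(* Two words u, v of N_1 S_1^* ... N_m S_m^* N_{m+1} are summarized by the
   word that uses, in each block h, the S_h^*-factor s ++ t, where s and t
   are the S_h^*-factors of u and v: the image of s ++ t contains those of s
   and of t because both contain the empty word.  Merging the words of a
   finite set one at a time gives a single summary. *)

Section Substitution.

Variables (D S : Type) (phi : D -> lang S).

Definition subst_le (u v : seq D) : Prop :=
  forall x, subst_word phi u x -> subst_word phi v x.

Lemma subst_word_cat (u v : seq D) (x : seq S) :
  subst_word phi (u ++ v) x <->
  exists x1 x2, x = x1 ++ x2 /\ subst_word phi u x1 /\ subst_word phi v x2.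
Proof.
elim: u x => [|d u IH] x /=.
  split=> [H|[x1 [x2 [-> [-> H]]]]] //.
  by exists [::], x.
split.
- move=> [y1 [y2 [-> [H1 /IH [z1 [z2 [-> [Hz1 Hz2]]]]]]]].
  exists (y1 ++ z1), z2; rewrite catA; split=> //; split=> //.
  by exists y1, z1.
- move=> [x1 [x2 [-> [[y1 [y2 [-> [H1 H2]]]] Hx2]]]].
  exists y1, (y2 ++ x2); rewrite catA; split=> //; split=> //.
  by apply/IH; exists y2, x2.
Qed.

Lemma subst_le_cat (u u' v v' : seq D) :
  subst_le u u' -> subst_le v v' -> subst_le (u ++ v) (u' ++ v').
Proof.
move=> Hu Hv x /subst_word_cat [x1 [x2 [-> [H1 H2]]]].
by apply/subst_word_cat; exists x1, x2; split; last split; [| exact: Hu | exact: Hv].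
Qed.

Lemma subst_le_catr (u v : seq D) : subst_word phi v [::] -> subst_le u (u ++ v).
Proof.
move=> Hv x Hu; apply/subst_word_cat; exists x, [::].
by rewrite cats0.
Qed.

Lemma subst_le_catl (u v : seq D) : subst_word phi u [::] -> subst_le v (u ++ v).
Proof. by move=> Hu x Hv; apply/subst_word_cat; exists [::], x. Qed.

Lemma subst_word_star_nil (A : lang D) (s : seq D) :
  (forall w, A w -> subst_word phi w [::]) -> lstar A s -> subst_word phi s [::].
Proof.
move=> HA [ws [Hws ->]].
elim: ws Hws => [|w ws IH] Hws //=.
apply/subst_word_cat; exists [::], [::]; split=> //; split.
- by apply/HA/Hws; left.
- by apply: IH => y Hy; apply: Hws; right.
Qed.

End Substitution.

Lemma lstar_nil (T : Type) (A : lang T) : lstar A [::].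
Proof. by exists [::]. Qed.

Lemma lstar_cat (T : Type) (A : lang T) (s t : seq T) :
  lstar A s -> lstar A t -> lstar A (s ++ t).
Proof.
move=> [ws [Hws ->]] [wt [Hwt ->]]; exists (ws ++ wt); rewrite flatten_cat.
split=> // y /(@Stdlib.Lists.List.in_app_or _ ws wt y) [/Hws|/Hwt] //.
Qed.

Section BlockLanguage.

Variables (D S : Type) (phi : D -> lang S).

Lemma block_lang_nonempty (NS : seq (seq D * ufregex D)) (Nlast : seq D) :
  exists w, block_lang NS Nlast w.
Proof.
elim: NS => [|[N Sr] NS [w Hw]] /=; first by exists Nlast.
exists (N ++ ([::] ++ w)), N, ([::] ++ w); split=> //; split=> //.
by exists [::], w; split; last split; [| exact: lstar_nil |].
Qed.

Lemma block_lang_merge (NS : seq (seq D * ufregex D)) (Nlast : seq D) :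
  (forall p, Stdlib.Lists.List.In p NS -> forall w, uflang p.2 w -> subst_word phi w [::]) ->
  forall u v, block_lang NS Nlast u -> block_lang NS Nlast v ->
  exists w, [/\ block_lang NS Nlast w, subst_le phi u w & subst_le phi v w].
Proof.
elim: NS => [|[N Sr] NS IH] Heps u v /=.
  by move=> -> ->; exists Nlast; split.
move=> [_ [_ [-> [-> [s [b [-> [Hs Hb]]]]]]]].
move=> [_ [_ [-> [-> [t [c [-> [Ht Hc]]]]]]]].
have HSr : forall w, uflang Sr w -> subst_word phi w [::].
  by apply: (Heps (N, Sr)); left.
have [d [Hd Hbd Hcd]] := IH (fun p Hp => Heps p (or_intror Hp)) b c Hb Hc.
exists (N ++ ((s ++ t) ++ d)); split.
- exists N, ((s ++ t) ++ d); split=> //; split=> //.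
  by exists (s ++ t), d; split; last split; [| exact: lstar_cat |].
- apply: subst_le_cat => //; apply: subst_le_cat => //.
  exact/subst_le_catr/(subst_word_star_nil HSr).
- apply: subst_le_cat => //; apply: subst_le_cat => //.
  exact/subst_le_catl/(subst_word_star_nil HSr).
Qed.

End BlockLanguage.

Theorem proposition14 (Delta Sigma : finType) (phi : Delta -> lang Sigma)
  (NS : seq (seq Delta * ufregex Delta)) (Nlast : seq Delta) :
  regular_subst phi ->
  union_free (block_lang NS Nlast) ->
  (forall p, Stdlib.Lists.List.In p NS -> forall w, uflang p.2 w -> subst_word phi w [::]) ->
  one_word_summaries phi (block_lang NS Nlast).
Proof.
move=> _ _ Heps; elim=> [|u F IH] HF.
  have [w Hw] := block_lang_nonempty NS Nlast.
  by exists w; split=> // x [u [[] _]].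
have [w0 [Hw0 HF0]] := IH (fun y Hy => HF y (or_intror Hy)).
have [w [Hw Huw Hw0w]] := block_lang_merge Heps (HF u (or_introl erefl)) Hw0.
exists w; split=> // x [u' [[<-|Hu'] Hx]]; first exact: Huw.
by apply/Hw0w/HF0; exists u'.
Qed.
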